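(* Let $d\geq 1$ and let $\mathcal{W}_d=\{(\lambda_1,\dots,\lambda_d)\in\mathbb{Z}^d : \lambda_1>\dots>\lambda_d\}$, viewed as a graph in which two vertices are adjacent iff they are at Euclidean distance $1$, with rank $r(\lambda)=\sum_{i=1}^d\lambda_i-\binom{d+1}{2}$. Let $\mu,\lambda\in\mathcal{W}_d$ with $r(\mu)\leq r(\lambda)$, and let $W_0,W_1,W_2,\dots$ be any sequence of words in the two letters $L,R$ such that $W_n$ contains exactly $n$ letters $L$ and exactly $n+r(\lambda)-r(\mu)$ letters $R$. Then $$\sum_{n\geq 0} Z_d(W_n;\mu,\lambda)\frac{x^{2n+r(\lambda)-r(\mu)}}{n!\,(n+r(\lambda)-r(\mu))!}=\det\big(I_{\lambda_i-\mu_j}(2x)\big)_{1\leq i,j\leq d}.$$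
   Context: For a word $W=L^{b_k}R^{a_k}\cdots L^{b_1}R^{a_1}$, $Z_d(W;\mu,\lambda)$ is the number of walks in the graph $\mathcal{W}_d$ from $\mu$ to $\lambda$ that consist of $a_1$ rank-increasing steps, then $b_1$ rank-decreasing steps, then $a_2$ rank-increasing steps, then $b_2$ rank-decreasing steps, and so on, ending with $b_k$ rank-decreasing steps (a step goes between adjacent vertices and changes the rank by $+1$ or $-1$). $I_k$ denotes the modified Bessel function of integer order $k$: for $k\geq 0$, $I_k(2x)=\sum_{n\geq 0}\frac{x^{2n+k}}{n!\,(n+k)!}$, and $I_{-k}=I_k$. *)

From HB Require Import structures.
From mathcomp Require Import all_boot all_order all_algebra.
From mathcomp Require Import all_classical all_reals all_analysis.
Set Implicit Arguments. Unset Strict Implicit. Unset Printing Implicit Defensive.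
Import Order.TTheory GRing.Theory Num.Theory numFieldNormedType.Exports.
Local Open Scope ring_scope.

(* Vertices of W_d are functions 'I_d -> int (lambda_1 = lam 0, ...). *)
Definition inW (d : nat) (lam : 'I_d -> int) : bool :=
  [forall i : 'I_d, forall j : 'I_d, (i < j)%N ==> (lam j < lam i)].

Definition rank (d : nat) (lam : 'I_d -> int) : int :=
  \sum_(i < d) lam i - ('C(d.+1, 2))%:Z.

Inductive letter := L | R.
Definition isL (c : letter) : bool := if c is L then true else false.
Definition isR (c : letter) : bool := if c is R then true else false.

(* a step along letter c in coordinate i: R = +e_i (rank-increasing),
   L = -e_i (rank-decreasing).  The neighbours of v in Z^d at Euclidean
   distance 1 are exactly the v +- e_i. *)
Definition step (d : nat) (c : letter) (i : 'I_d) (v : 'I_d -> int) : 'I_d -> int :=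
  fun j => if j == i then (if c is R then v j + 1 else v j - 1) else v j.

Fixpoint nwalks (d : nat) (s : seq letter) (v w : 'I_d -> int) : nat :=
  match s with
  | [::] => if [forall i, v i == w i] then 1%N else 0%N
  | c :: s' => (\sum_(i < d)
                  (if inW (step c i v) then nwalks s' (step c i v) w else 0%N))%N
  end.

(* Z_d(W; mu, lambda): W = L^{b_k} R^{a_k} ... L^{b_1} R^{a_1} is given as the
   list of its letters written left to right; the walk performs the letters
   from right to left (first R^{a_1}). *)
Definition Z (d : nat) (W : seq letter) (mu lam : 'I_d -> int) : nat :=
  nwalks (rev W) mu lam.

Definition besselI (Rt : realType) (k : int) (y : Rt) : Rt :=
  limn (series (fun n : nat =>
    (y / 2) ^+ (2 * n + `|k|)%N / ((n`! * (n + `|k|)`!)%N)%:R)).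

(* By the reflection principle, walks in the chamber W_d are counted by the alternating
   sum over permutations p of the unrestricted walks in Z^d from mu o p to lambda: a walk
   that leaves the chamber first hits a wall v_a = v_b, and the transposition (a b)
   cancels it against its reflection.  For an unrestricted walk with q steps L and p steps
   R, the count times x^(p+q)/(p! q!) is the y^q-coefficient of
   prod_i sum_b x^(m_i+2b)/((m_i+b)! b!) y^b with m_i = lambda_i - v_i; this is proved by
   induction on the word, since multiplying by x turns a shift of m_i down into the
   Euler operator m_i + y d/dy and a shift up into d/dy, whichever order the letters
   come in.  Summing over n is then a Cauchy product of d absolutely convergent Bessel
   series, and the alternating sum over p is the determinant. *)

From HB Require Import structures.
From mathcomp Require Import all_boot all_order all_algebra.
From mathcomp Require Import all_classical all_reals all_analysis.
From mathcomp Require Import perm.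
From mathcomp Require Import zify ring.
Set Implicit Arguments. Unset Strict Implicit. Unset Printing Implicit Defensive.
Import Order.TTheory GRing.Theory Num.Theory numFieldNormedType.Exports.
Local Open Scope ring_scope.

Fixpoint free_walks (d : nat) (s : seq letter) (v w : 'I_d -> int) : nat :=
  match s with
  | [::] => if [forall i, v i == w i] then 1%N else 0%N
  | c :: s' => (\sum_(i < d) free_walks s' (step c i v) w)%N
  end.

Definition perm_vertex d (p : 'S_d) (v : 'I_d -> int) : 'I_d -> int := v \o p.

Lemma step_perm_vertex d c i (p : 'S_d) v :
  step c i (perm_vertex p v) = perm_vertex p (step c (p i) v).
Proof. by apply: funext => j; rewrite /step /perm_vertex /= (inj_eq perm_inj). Qed.

Lemma perm_vertexM d (p q : 'S_d) v :
  perm_vertex p (perm_vertex q v) = perm_vertex (p * q) v.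
Proof. by apply: funext => j; rewrite /perm_vertex /= permM. Qed.

Section SignedWalks.
Variable R : numDomainType.

Definition signed_walks d s (v w : 'I_d -> int) : R :=
  \sum_(p : 'S_d) (-1) ^+ p * (free_walks s (perm_vertex p v) w)%:R.

Lemma signed_walks_cons d c s (v w : 'I_d -> int) :
  signed_walks (c :: s) v w = \sum_(i < d) signed_walks s (step c i v) w.
Proof.
rewrite /signed_walks exchange_big /=; apply: eq_bigr => p _.
rewrite natr_sum mulr_sumr [RHS](reindex_inj (@perm_inj _ p)) /=.
by apply: eq_bigr => i _; rewrite step_perm_vertex.
Qed.

Lemma signed_walks_perm d s (q : 'S_d) (v w : 'I_d -> int) :
  signed_walks s (perm_vertex q v) w = (-1) ^+ q * signed_walks s v w.
Proof.
rewrite /signed_walks mulr_sumr (reindex_inj (mulIg q^-1)%g) /=.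
apply: eq_bigr => p _; rewrite perm_vertexM -mulgA mulVg mulg1.
by rewrite odd_permM odd_permV mulrA -signr_addb addbC.
Qed.

(* The reflection in the wall v a = v b fixes v and changes the sign. *)
Lemma signed_walks_wall d s (v w : 'I_d -> int) (a b : 'I_d) :
  a != b -> v a = v b -> signed_walks s v w = 0.
Proof.
move=> ab vab.
have fix_v : perm_vertex (tperm a b) v = v.
  apply: funext => j; rewrite /perm_vertex /= permE /=.
  by case: ifP => [/eqP->//|]; case: ifP => // /eqP->.
have := signed_walks_perm s (tperm a b) v w.
rewrite fix_v odd_tperm ab expr1 mulN1r => /eqP.
by rewrite -subr_eq0 opprK -mulr2n mulrn_eq0 /= => /eqP.
Qed.

End SignedWalks.

Lemma incr_ord_geq n (f : 'I_n -> 'I_n) :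
  {homo f : i j / (i < j)%N} -> forall i : 'I_n, (i <= f i)%N.
Proof.
move=> f_incr.
suff ge_k k (i : 'I_n) : nat_of_ord i = k -> (k <= f i)%N by move=> i; exact: ge_k.
elim: k i => [//|k IH] i ik.
have kn : (k < n)%N by rewrite -ik ltnW.
have := IH (Ordinal kn) erefl; have := f_incr (Ordinal kn) i.
rewrite ik /= ltnSn => /(_ isT); lia.
Qed.

Lemma incr_ord_id n (f : 'I_n -> 'I_n) :
  injective f -> {homo f : i j / (i < j)%N} -> f =1 id.
Proof.
move=> f_inj f_incr i.
have /psumr_eq0P eq0 : forall i : 'I_n, true -> 0 <= ((f i)%:R : int) - i%:R.
  by move=> j _; rewrite subr_ge0 ler_nat incr_ord_geq.
apply/val_inj/eqP; rewrite -(eqr_nat int) -subr_eq0; apply/eqP/eq0 => //.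
by rewrite sumrB [X in _ - X](reindex_inj f_inj) subrr.
Qed.

Lemma inW_lt d (v : 'I_d -> int) (i j : 'I_d) : inW v -> (i < j)%N -> v j < v i.
Proof. by move=> /forallP /(_ i) /forallP /(_ j) /implyP; apply. Qed.

Lemma perm_vertex_inW_eq1 d (p : 'S_d) (v w : 'I_d -> int) :
  inW v -> inW w -> perm_vertex p v =1 w -> p = 1%g.
Proof.
move=> vW wW pv_w; apply/permP => i; rewrite perm1.
apply: incr_ord_id i; first exact: perm_inj.
move=> i j ij; have := inW_lt wW ij; rewrite -!pv_w /perm_vertex /=.
case: (ltngtP (p i) (p j)) => // [pij|/val_inj/perm_inj->]; last by rewrite ltxx.
by rewrite ltNge => /negP; case; rewrite ltW // inW_lt.
Qed.

Lemma step_notin_W d c i (v : 'I_d -> int) : inW v -> ~~ inW (step c i v) ->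
  exists a b, a != b /\ step c i v a = step c i v b.
Proof.
move=> vW /forallPn [a /forallPn [b]]; rewrite negb_imply -leNgt => /andP [ab le].
exists a, b; split; first by rewrite neq_ltn ab.
have := inW_lt vW ab; move: le; rewrite /step.
case: c => /=; case: (eqVneq a i) => ai; case: (eqVneq b i) => bi; subst;
  try (by move: ab; rewrite ltnn); lia.
Qed.

Lemma nwalks_signed (R : numDomainType) d s (v w : 'I_d -> int) :
  inW v -> inW w -> (nwalks s v w)%:R = signed_walks R s v w.
Proof.
elim: s v => [|c s IH] v vW wW.
- rewrite /signed_walks (bigD1 (1%g : 'S_d)) //= big1 ?addr0.
    rewrite odd_perm1 expr0 mul1r.
    by congr (if _ then _ else _)%:R; apply: eq_forallb => i; rewrite /perm_vertex /= perm1.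
  move=> p /eqP p1; case: ifP => [/forallP pv_w|]; rewrite ?mulr0 //.
  by case: p1; apply: perm_vertex_inW_eq1 vW wW _ => i; apply/eqP.
- rewrite signed_walks_cons /= natr_sum; apply: eq_bigr => i _.
  case: ifP => [sW|/negbT sW]; first exact: IH.
  by have [a [b [ab /signed_walks_wall->]]] := step_notin_W vW sW.
Qed.

Lemma deriv_prod_seq (R : comNzRingType) (I : eqType) (r : seq I) (F : I -> {poly R}) :
  uniq r ->
  (\prod_(i <- r) F i)^`() = \sum_(i <- r) (F i)^`() * \prod_(j <- r | j != i) F j.
Proof.
elim: r => [|a r IH] /=; first by rewrite !big_nil -polyC1 derivC.
case/andP=> a_r r_uniq; rewrite !big_cons derivM IH // eqxx /=.
congr (_ + _).
  congr (_ * _); rewrite big_seq_cond [RHS]big_seq_cond; apply: eq_bigl => j.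
  by case: (eqVneq j a) => [->|]; rewrite ?(negbTE a_r) ?andbT.
rewrite mulr_sumr [LHS]big_seq [RHS]big_seq; apply: eq_bigr => i ir.
by rewrite big_cons (_ : a != i) 1?mulrCA //; apply: contraNneq a_r => ->.
Qed.

Lemma deriv_prod (R : comNzRingType) (I : finType) (F : I -> {poly R}) :
  (\prod_i F i)^`() = \sum_i (F i)^`() * \prod_(j | j != i) F j.
Proof. exact: deriv_prod_seq (index_enum_uniq I). Qed.

Lemma coefM_eq_upto (R : nzSemiRingType) (p1 p2 q1 q2 : {poly R}) n :
  (forall j, (j <= n)%N -> p1`_j = q1`_j) -> (forall j, (j <= n)%N -> p2`_j = q2`_j) ->
  forall j, (j <= n)%N -> (p1 * p2)`_j = (q1 * q2)`_j.
Proof.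
move=> eq1 eq2 j jn; rewrite !coefM; apply: eq_bigr => k _.
have kj : (k <= j)%N by rewrite -ltnS.
by rewrite eq1 ?eq2 //; lia.
Qed.

Definition letter_shift (c : letter) : int := if c is R then 1 else -1.

Lemma step_eq d c (i : 'I_d) v : step c i v i = v i + letter_shift c.
Proof. by rewrite /step eqxx; case: c. Qed.

Lemma step_neq d c (i j : 'I_d) v : j != i -> step c i v j = v j.
Proof. by rewrite /step => /negbTE->. Qed.

Lemma sum_diff_step d c (i : 'I_d) (v w : 'I_d -> int) :
  \sum_j (w j - step c i v j) = \sum_j (w j - v j) - letter_shift c.
Proof.
rewrite (bigD1 i) // [in RHS](bigD1 i) //= step_eq opprD addrA addrAC.
by congr (_ + _ - _); apply: eq_bigr => j /step_neq->.
Qed.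

Lemma prod_diff_step (P : comNzRingType) (G : int -> P) d c (i : 'I_d) (v w : 'I_d -> int) :
  \prod_j G (w j - step c i v j) =
  G (w i - v i - letter_shift c) * \prod_(j | j != i) G (w j - v j).
Proof.
rewrite (bigD1 i) //= step_eq opprD addrA.
by congr (_ * _); apply: eq_bigr => j /step_neq->.
Qed.

Lemma natr_fact_neq0 (F : numDomainType) n : n`!%:R != 0 :> F.
Proof. by rewrite pnatr_eq0 -lt0n fact_gt0. Qed.

Section FreeWalkCoefficients.
Variables (F : numFieldType) (x : F).

(* For t = m + b this is the b-th term of the series of I_m(2x); the terms with t < 0
   vanish, which is how I_(-m) = I_m comes about. *)
Definition bessel_term (t : int) (b : nat) : F :=
  if t is Posz u then x ^+ (u + b) / (u`! * b`!)%:R else 0.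

Lemma bessel_term_pred t b : x * bessel_term (t - 1) b = t%:~R * bessel_term t b.
Proof.
case: t => [[|u]|u] /=; [by rewrite mul0r mulr0 | | by rewrite !mulr0].
rewrite subn1 /= factS !natrM addSn exprS.
have := natr_fact_neq0 F u; have := natr_fact_neq0 F b => h1 h2.
rewrite -[(u.+1)%:~R]/((u.+1)%:R : F).
by field; rewrite h1 h2 addrC natr1 pnatr_eq0.
Qed.

Lemma bessel_term_succ t b : x * bessel_term t b = b.+1%:R * bessel_term t b.+1.
Proof.
case: t => [u|u] /=; last by rewrite !mulr0.
rewrite factS !natrM addnS exprS.
have := natr_fact_neq0 F u; have := natr_fact_neq0 F b => h1 h2.
by field; rewrite h1 h2 addrC natr1 pnatr_eq0.
Qed.

Arguments bessel_term : simpl never.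

Definition bessel_poly (K : nat) (m : int) : {poly F} := \poly_(b < K) bessel_term (m + b%:Z) b.

Lemma bessel_poly_pred K m :
  x *: bessel_poly K (m - 1) = m%:~R *: bessel_poly K m + 'X * (bessel_poly K m)^`().
Proof.
apply/polyP => b; rewrite coefZ coefD coefZ coefXM coef_deriv !coef_poly.
case: b => [|b] /=; first by rewrite !addr0; case: ifP => _; rewrite ?mulr0 // bessel_term_pred.
rewrite addrAC; case: ifP => bK; last by rewrite !mulr0 add0r mul0rn.
by rewrite bessel_term_pred intrD mulrDl mulr_natl.
Qed.

Lemma coef_bessel_poly_succ K m b : (b.+1 < K)%N ->
  (x *: bessel_poly K (m + 1))`_b = ((bessel_poly K m)^`())`_b.
Proof.
move=> bK; rewrite coefZ coef_deriv !coef_poly bK (ltnW bK).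
by rewrite -addrA -[1 + _]PoszD add1n bessel_term_succ mulr_natl.
Qed.

Definition walk_coef K q d (v w : 'I_d -> int) : F :=
  (\prod_i bessel_poly K (w i - v i))`_q.

Lemma sum_stepL_walk_coef K q d (v w : 'I_d -> int) : (q.+1 < K)%N ->
  \sum_i x * walk_coef K q (step L i v) w = walk_coef K q.+1 v w *+ q.+1.
Proof.
move=> qK; rewrite /walk_coef -coef_deriv deriv_prod coef_sum.
apply: eq_bigr => i _; rewrite prod_diff_step opprK -coefZ scalerAl.
apply: (coefM_eq_upto (n := q)) => // j jq; apply: coef_bessel_poly_succ; lia.
Qed.

Lemma sum_stepR_walk_coef K q d (v w : 'I_d -> int) :
  \sum_i x * walk_coef K q (step R i v) w =
  walk_coef K q v w * ((\sum_i (w i - v i))%:~R + q%:R).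
Proof.
rewrite /walk_coef; set Pw := \prod_i _.
transitivity ((\sum_i x *: bessel_poly K (w i - v i - 1) *
                 \prod_(j | j != i) bessel_poly K (w j - v j))`_q).
  by rewrite coef_sum; apply: eq_bigr => i _; rewrite prod_diff_step -coefZ -scalerAl.
under eq_bigr do rewrite bessel_poly_pred mulrDl -scalerAl -mulrA.
rewrite big_split /= -mulr_sumr -deriv_prod -/Pw.
rewrite (eq_bigr (fun i => (w i - v i)%:~R *: Pw)); last first.
  by move=> i _; rewrite /Pw [in RHS](bigD1 i).
rewrite -scaler_suml coefD coefZ coefXM coef_deriv -(rmorph_sum intr).
by case: q => [|q] /=; ring.
Qed.

Lemma bessel_term00 : bessel_term 0 0 = 1.
Proof. by rewrite /bessel_term /= expr0 mul1r fact0 muln1 invr1. Qed.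

Lemma free_walks_coef K d s (v w : 'I_d -> int) :
  (count isL s < K)%N ->
  \sum_i (w i - v i) = (count isR s)%:Z - (count isL s)%:Z ->
  (free_walks s v w)%:R * bessel_term (count isR s) (count isL s)
  = walk_coef K (count isL s) v w.
Proof.
elim: s v => [|c s IH] v /= sK sum_vw.
- rewrite bessel_term00 mulr1 /walk_coef coef0_prod.
  under eq_bigr do rewrite coef_poly sK addr0.
  case: ifP => [/forallP vw|/negbT /forallPn [i vi]].
    by rewrite big1 // => i _; rewrite (eqP (vw i)) subrr bessel_term00.
  have [/existsP [j]|/existsPn ge0] := boolP [exists j, w j - v j < 0].
    by rewrite (bigD1 j) //=; case: (w j - v j) => // u _; rewrite mul0r.
  have diff_ge0 j : true -> 0 <= w j - v j by rewrite leNgt ge0.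
  have /eqP := @psumr_eq0P _ _ _ _ diff_ge0 (etrans sum_vw (subrr _)) i isT.
  by rewrite subr_eq0 eq_sym (negbTE vi).
- case: c sK sum_vw => /= sK sum_vw; rewrite ?add0n ?add1n in sK sum_vw *;
    set p := count isR s in sK sum_vw *; set q := count isL s in sK sum_vw *.
  + have IHi i : (free_walks s (step L i v) w)%:R * bessel_term p q =
                 walk_coef K q (step L i v) w.
      by apply: IH; [exact: ltnW | rewrite sum_diff_step sum_vw /letter_shift -/p -/q; lia].
    have q1_neq0 : q.+1%:R != 0 :> F by rewrite pnatr_eq0.
    apply: (mulIf q1_neq0); rewrite -mulrA [_ * q.+1%:R]mulrC -bessel_term_succ.
    rewrite mulr_natr -sum_stepL_walk_coef // natr_sum mulr_suml.
    by apply: eq_bigr => i _; rewrite -IHi mulrCA.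
  + have IHi i : (free_walks s (step R i v) w)%:R * bessel_term p q =
                 walk_coef K q (step R i v) w.
      by apply: IH => //; rewrite sum_diff_step sum_vw /letter_shift -/p -/q; lia.
    have p1_neq0 : p.+1%:R != 0 :> F by rewrite pnatr_eq0.
    apply: (mulIf p1_neq0); rewrite -mulrA [_ * p.+1%:R]mulrC.
    rewrite -[p.+1%:R]/(p.+1%:~R : F) -bessel_term_pred.
    rewrite (_ : p.+1%:Z - 1 = p); last lia.
    rewrite (_ : p.+1%:~R = (\sum_i (w i - v i))%:~R + q%:R :> F); last first.
      by rewrite sum_vw -[q%:R]/(q%:~R : F) -intrD; congr (_%:~R); lia.
    rewrite -sum_stepR_walk_coef natr_sum mulr_suml.
    by apply: eq_bigr => i _; rewrite -IHi mulrCA.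
Qed.

End FreeWalkCoefficients.

Lemma coefM_norm_le (R : numDomainType) (p1 p2 q1 q2 : {poly R}) :
  (forall j, `|p1`_j| <= q1`_j) -> (forall j, `|p2`_j| <= q2`_j) ->
  forall j, `|(p1 * p2)`_j| <= (q1 * q2)`_j.
Proof.
move=> le1 le2 n; rewrite !coefM; apply: le_trans (ler_norm_sum _ _ _) _.
by apply: ler_sum => j _; rewrite normrM ler_pM.
Qed.

Lemma coef_prod_norm_le (R : numDomainType) d (p q : 'I_d -> {poly R}) :
  (forall i j, `|(p i)`_j| <= (q i)`_j) ->
  forall n, `|(\prod_i p i)`_n| <= (\prod_i q i)`_n.
Proof.
move=> le_pq; apply: (big_rec2 (fun a b : {poly R} => forall n, `|a`_n| <= b`_n)).
  by move=> n; rewrite coef1; case: (n == 0)%N; rewrite ?normr1 ?normr0.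
by move=> i a b _; apply: coefM_norm_le.
Qed.

Lemma coef_prod_eq_upto (R : nzSemiRingType) d (p q : 'I_d -> {poly R}) n :
  (forall i j, (j <= n)%N -> (p i)`_j = (q i)`_j) ->
  forall j, (j <= n)%N -> (\prod_i p i)`_j = (\prod_i q i)`_j.
Proof.
move=> eq_pq.
apply: (big_rec2 (fun a b : {poly R} => forall j, (j <= n)%N -> a`_j = b`_j)) => //.
by move=> i a b _; exact: coefM_eq_upto (eq_pq i).
Qed.

Local Open Scope classical_set_scope.

Section CauchyProduct.
Variables (R : realType) (d : nat).
Implicit Types (g : 'I_d -> nat -> R) (N n : nat).

Definition trunc_prod g N : {poly R} := \prod_i \poly_(b < N) g i b.

(* The sum of prod_i g i b_i over b_1 + ... + b_d = n, read off a product of truncated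
   polynomials. *)
Definition cauchy_coef g n : R := (trunc_prod g n.+1)`_n.

Lemma cauchy_coef_trunc g n N : (n < N)%N -> cauchy_coef g n = (trunc_prod g N)`_n.
Proof.
move=> nN; apply: (coef_prod_eq_upto (n := n)) => // i j jn.
by rewrite !coef_poly ltnS jn (leq_ltn_trans jn nN).
Qed.

Lemma coef_trunc_prod_norm_le g N M n : (N <= M)%N ->
  `|(trunc_prod g N)`_n| <= (trunc_prod (fun i b => `|g i b|) M)`_n.
Proof.
move=> NM; apply: coef_prod_norm_le => i j; rewrite !coef_poly.
case: ifP => jN; first by rewrite (leq_trans jN NM).
by rewrite normr0; case: ifP.
Qed.

Lemma prod_series_split g N B : (N <= B)%N -> (size (trunc_prod g N) <= B)%N ->
  \prod_i series (g i) N =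
  series (cauchy_coef g) N + \sum_(N <= n < B) (trunc_prod g N)`_n.
Proof.
move=> NB sB; have -> : \prod_i series (g i) N = (trunc_prod g N).[1].
  rewrite horner_prod; apply: eq_bigr => i _.
  rewrite (horner_coef_wide _ (size_poly _ _)) /series /= big_mkord.
  by apply: eq_bigr => b _; rewrite coef_poly ltn_ord expr1n mulr1.
rewrite (horner_coef_wide 1 sB); under eq_bigr do rewrite expr1n mulr1.
rewrite -(big_mkord xpredT (fun n => (trunc_prod g N)`_n)) (@big_cat_nat _ _ _ N 0 B) //.
by congr (_ + _); apply: eq_big_nat => n /andP [_ nN]; rewrite (cauchy_coef_trunc _ nN).
Qed.

Lemma coef_trunc_prod_ge0 g N n : (forall i b, 0 <= g i b) -> 0 <= (trunc_prod g N)`_n.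
Proof.
move=> g_ge0; apply: (big_ind (fun a : {poly R} => forall n, 0 <= a`_n)) => //.
- by move=> k; rewrite coef1; case: (k == 0)%N.
- by move=> a b a_ge0 b_ge0 k; rewrite coefM sumr_ge0 // => j _; rewrite mulr_ge0.
- by move=> i _ k; rewrite coef_poly; case: ifP.
Qed.

Lemma series_cauchy_coef_le_prod g N : (forall i b, 0 <= g i b) ->
  series (cauchy_coef g) N <= \prod_i series (g i) N.
Proof.
move=> g_ge0; rewrite (prod_series_split (leq_maxl N (size (trunc_prod g N)))) ?leq_maxr //.
by rewrite lerDl sumr_ge0 // => n _; exact: coef_trunc_prod_ge0.
Qed.

Lemma series_le_lim (u : R ^nat) N : (forall n, 0 <= u n) -> cvgn (series u) ->
  series u N <= limn (series u).
Proof.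
move=> u_ge0 u_cvg; apply: nondecreasing_cvgn_le u_cvg _.
by apply: nondecreasing_series => n _ _; exact: u_ge0.
Qed.

Lemma norm_prod_series_sub_cauchy g N B : (N <= B)%N -> (size (trunc_prod g N) <= B)%N ->
  `|\prod_i series (g i) N - series (cauchy_coef g) N| <=
  series (cauchy_coef (fun i b => `|g i b|)) B - series (cauchy_coef (fun i b => `|g i b|)) N.
Proof.
move=> NB sB; rewrite (prod_series_split NB sB) addrC addKr.
rewrite /series /= (@big_cat_nat _ _ _ N 0 B) //= addrAC subrr add0r.
apply: le_trans (ler_norm_sum _ _ _) _; apply: ler_sum_nat => n /andP [Nn _].
exact/coef_trunc_prod_norm_le/ltnW.
Qed.

Lemma cvg_series_cauchy_coef g : (forall i, cvgn (series (fun n => `|g i n|))) ->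
  series (cauchy_coef g) @ \oo --> \prod_i limn (series (g i)).
Proof.
move=> abs_cvg; pose ga : 'I_d -> nat -> R := fun i n => `|g i n|.
have ga_ge0 i n : 0 <= ga i n by exact: normr_ge0.
have C_ge0 n : 0 <= cauchy_coef ga n by exact: coef_trunc_prod_ge0.
have C_cvg : cvgn (series (cauchy_coef ga)).
  apply: nondecreasing_is_cvgn; first by apply: nondecreasing_series => n _ _.
  exists (\prod_i limn (series (ga i))) => _ [N _ <-].
  apply: le_trans (series_cauchy_coef_le_prod N ga_ge0) _.
  apply: ler_prod => i _; rewrite sumr_ge0 //=; exact: series_le_lim (abs_cvg i).
set LC := limn (series (cauchy_coef ga)).
have err N : `|\prod_i series (g i) N - series (cauchy_coef g) N| <=
             LC - series (cauchy_coef ga) N.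
  apply: le_trans (norm_prod_series_sub_cauchy (leq_maxl N (size (trunc_prod g N)))
                     (leq_maxr _ _)) _.
  by rewrite lerB // series_le_lim.
have prod_cvg : (fun N => \prod_i series (g i) N) @ \oo --> \prod_i limn (series (g i)).
  apply: (@cvg_big R 'I_d *%R 1 xpredT (@mul_continuous R)) => i _.
  exact/normed_cvg/abs_cvg.
have err_cvg : (fun N => \prod_i series (g i) N - series (cauchy_coef g) N) @ \oo --> 0.
  apply: (@squeeze_cvgr _ _ _ _ (fun N => - (LC - series (cauchy_coef ga) N))
                                 (fun N => LC - series (cauchy_coef ga) N)).
  - by near=> N; rewrite -ler_norml err.
  - by rewrite -oppr0; apply: cvgN; rewrite -(subrr LC); apply: cvgB => //; exact: cvg_cst.
  - by rewrite -(subrr LC); apply: cvgB => //; exact: cvg_cst.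
have -> : series (cauchy_coef g) = (fun N => \prod_i series (g i) N -
                (\prod_i series (g i) N - series (cauchy_coef g) N)).
  by apply: funext => N; rewrite subKr.
by rewrite -[X in _ --> X]subr0; apply: cvgB.
Unshelve. all: by end_near.
Qed.
End CauchyProduct.

Section BesselSeries.
Variables (R : realType) (x : R).

Lemma exp_coeff_le_lim (y : R) n : 0 <= y -> exp_coeff y n <= limn (series (exp_coeff y)).
Proof.
move=> y_ge0; apply: le_trans (series_le_lim n.+1 _ (is_cvg_series_exp_coeff y)).
  by rewrite /series /= big_nat_recr //= lerDr sumr_ge0 // => k _; exact: exp_coeff_ge0.
by move=> k; exact: exp_coeff_ge0.
Qed.

(* |x|^(t+b)/(t! b!) <= e^|x| |x|^b/b!, and the latter is summable in b. *)
Lemma bessel_series_abs_cvg (m : int) :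
  cvgn (series (fun b => `|bessel_term x (m + b%:Z) b|)).
Proof.
have exp_ge0 b : 0 <= exp_coeff `|x| b := exp_coeff_ge0 b (normr_ge0 x).
pose E := limn (series (exp_coeff `|x|)).
have E_ge0 : 0 <= E := le_trans (exp_ge0 0%N) (exp_coeff_le_lim 0 (normr_ge0 x)).
apply: (series_le_cvg (v_ := fun b => E * exp_coeff `|x| b)).
- by move=> b.
- by move=> b; rewrite mulr_ge0.
- move=> b; rewrite /bessel_term; case: (m + b%:Z) => [u|u]; last by rewrite normr0 mulr_ge0.
  rewrite normrM normfV normrX normr_nat natrM invfM exprD mulrACA.
  by rewrite ler_pM ?mulr_ge0 ?exprn_ge0 ?invr_ge0 ?exp_coeff_le_lim.
- by apply: is_cvg_seriesZ; exact: is_cvg_series_exp_coeff.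
Qed.

Lemma bessel_series_cvg (m : int) :
  series (fun b => bessel_term x (m + b%:Z) b) @ \oo --> besselI m (2 * x).
Proof.
have cv : cvgn (series (fun b => bessel_term x (m + b%:Z) b)).
  by apply: (@normed_cvg _ R^o); exact: bessel_series_abs_cvg.
rewrite /besselI [2 * x]mulrC mulfK ?pnatr_eq0 //.
case: m cv => [u|u] cv.
- suff -> : (fun n => x ^+ (2 * n + `|Posz u|) / (n`! * (n + `|Posz u|)`!)%:R) =
            (fun b => bessel_term x (Posz u + b%:Z) b) by [].
  apply: funext => b; rewrite -PoszD /bessel_term /= [(b`! * _)%N]mulnC (addnC b u).
  by congr (x ^+ _ / _); lia.
- (* Only the terms with b > u are nonzero; shifting by u.+1 gives the series of I_{u+1}. *)
  pose T n := x ^+ (2 * n + `|Negz u|) / (n`! * (n + `|Negz u|)`!)%:R.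
  have T_shift : (fun n => series (fun b => bessel_term x (Negz u + b%:Z) b) (n + u.+1)) =
                 series T.
    apply: funext => n; rewrite /series /= (@big_cat_nat _ _ _ u.+1 0 (n + u.+1)) //=;
      last by rewrite leq_addl.
    rewrite big_nat_cond big1 ?add0r; last first.
      move=> b /andP [/andP [_ bu] _].
      by rewrite (_ : Negz u + b%:Z = Negz (u - b)) //; rewrite NegzE; lia.
    rewrite -{1}[u.+1]add0n big_addn addnK; apply: eq_bigr => b _.
    rewrite (_ : Negz u + (b + u.+1)%N%:Z = Posz b); last by rewrite NegzE; lia.
    by rewrite /bessel_term /T /= mulnC; congr (x ^+ _ / (_ * _)%:R); lia.
  have cT : series T @ \oo --> limn (series (fun b => bessel_term x (Negz u + b%:Z) b)).
    by rewrite -T_shift (cvg_shiftn u.+1).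
  by rewrite (cvg_lim _ cT).
Qed.

End BesselSeries.

Lemma Z_term_signed_cauchy_coef (R : realType) (x : R) d (mu lam : 'I_d -> int) W n k :
  inW mu -> inW lam -> count isL W = n -> count isR W = (n + k)%N ->
  k%:Z = \sum_i lam i - \sum_i mu i ->
  (Z W mu lam)%:R * x ^+ (2 * n + k) / (n`! * (n + k)`!)%:R =
  \sum_(p : 'S_d) (-1) ^+ p *
    cauchy_coef (fun i b => bessel_term x (lam i - mu (p i) + b%:Z) b) n.
Proof.
move=> muW lamW cL cR k_eq.
rewrite /Z (nwalks_signed R) // /signed_walks -mulrA mulr_suml; apply: eq_bigr => p _.
rewrite -mulrA; congr (_ * _).
have -> : x ^+ (2 * n + k) / (n`! * (n + k)`!)%:R =
          bessel_term x (count isR (rev W)) (count isL (rev W)).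
  by rewrite !count_rev cL cR /bessel_term [(n`! * _)%N]mulnC; congr (x ^+ _ / _); lia.
(* [walk_coef n.+1 n (perm_vertex p mu) lam] is convertible to the Cauchy coefficient. *)
rewrite (free_walks_coef x (K := n.+1)) !count_rev ?cL //.
rewrite sumrB.
have -> : \sum_i perm_vertex p mu i = \sum_i mu i by rewrite [RHS](reindex_inj (@perm_inj _ p)).
by rewrite -k_eq cR; lia.
Qed.

Theorem proposition4 (Rt : realType) (d : nat) (mu lam : 'I_d -> int)
  (W : nat -> seq letter) (x : Rt) :
  (0 < d)%N -> inW mu -> inW lam -> rank mu <= rank lam ->
  (forall n, count isL (W n) = n /\
             count isR (W n) = (n + `|rank lam - rank mu|)%N) ->
  series (fun n : nat =>
     (Z (W n) mu lam)%:R * x ^+ (2 * n + `|rank lam - rank mu|)%N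
       / ((n`! * (n + `|rank lam - rank mu|)`!)%N)%:R)
    @ \oo --> \det (\matrix_(i < d, j < d) besselI (lam i - mu j) (2 * x)).
Proof.
move=> _ muW lamW rank_le W_count.
set k := `|rank lam - rank mu|%N.
have k_eq : k%:Z = \sum_i lam i - \sum_i mu i.
  by rewrite /k gez0_abs ?subr_ge0 // /rank; ring.
pose g (p : 'S_d) i b := bessel_term x (lam i - mu (p i) + b%:Z) b.
have -> : series (fun n => (Z (W n) mu lam)%:R * x ^+ (2 * n + k) / (n`! * (n + k)`!)%:R) =
          (fun N => \sum_(p : 'S_d) (-1) ^+ p * series (cauchy_coef (g p)) N).
  apply: funext => N; rewrite /series /=.
  under eq_bigr => n _ do
    rewrite (Z_term_signed_cauchy_coef x muW lamW (W_count n).1 (W_count n).2 k_eq).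
  by rewrite exchange_big /=; apply: eq_bigr => p _; rewrite mulr_sumr.
rewrite /determinant; apply: (@cvg_big Rt _ +%R 0 xpredT (@add_continuous Rt)) => p _.
apply: cvgMr; under eq_bigr do rewrite mxE.
have -> : \prod_i besselI (lam i - mu (p i)) (2 * x) = \prod_i limn (series (g p i)).
  by apply: eq_bigr => i _; rewrite (cvg_lim _ (@bessel_series_cvg _ x _)).
by apply: cvg_series_cauchy_coef => i; exact: bessel_series_abs_cvg.
Qed.
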